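(* Let $n\ge2$, let $\alpha=(\alpha_1,\dots,\alpha_n)^T\in\mathbb{R}^n$ with $\alpha_1>\alpha_2>\cdots>\alpha_n$, and let $A=(a_{ij})$ be a real $n\times n$ matrix such that $AP\alpha\sim A\alpha$ for every $P\in\mathbf{P}_n$. Then all column sums of $A$ are equal: $\sum_{l=1}^n a_{ls}=\sum_{l=1}^n a_{lt}$ for all $1\le s,t\le n$.
   Context: For $x,y\in\mathbb{R}^n$, $x\prec y$ means $x=Dy$ for some $n\times n$ doubly stochastic matrix $D$; $x\sim y$ means $x\prec y$ and $y\prec x$. $\mathbf{P}_n$ is the set of $n\times n$ permutation matrices. *)

From HB Require Import structures.
From mathcomp Require Import all_boot all_order all_algebra all_fingroup.
Set Implicit Arguments. Unset Strict Implicit. Unset Printing Implicit Defensive.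
Import Order.TTheory GRing.Theory Num.Theory.
Local Open Scope ring_scope.

Definition doubly_stochastic (R : realFieldType) (n : nat) (D : 'M[R]_n) : Prop :=
  (forall i j, 0 <= D i j) /\
  (forall i, \sum_(j < n) D i j = 1) /\
  (forall j, \sum_(i < n) D i j = 1).

Definition majorized (R : realFieldType) (n : nat) (x y : 'cV[R]_n) : Prop :=
  exists D : 'M[R]_n, doubly_stochastic D /\ x = D *m y.

Definition maj_equiv (R : realFieldType) (n : nat) (x y : 'cV[R]_n) : Prop :=
  majorized x y /\ majorized y x.

From HB Require Import structures.
From mathcomp Require Import all_boot all_order all_algebra all_fingroup.
From mathcomp Require Import ring.
Set Implicit Arguments. Unset Strict Implicit. Unset Printing Implicit Defensive.
Import Order.TTheory GRing.Theory Num.Theory.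
Local Open Scope ring_scope.

(* A doubly stochastic matrix preserves the sum of the
   coordinates of a vector, so x \prec y forces sum(x) = sum(y).  The
   coordinate sum of A v is the pairing of v with the vector of column sums
   c_j = \sum_l a_lj of A.  Taking P the transposition swapping s and t,
   the hypothesis A P alpha \sim A alpha thus gives
       \sum_j c_j alpha_(tau j) = \sum_j c_j alpha_j,
   and only the terms j = s and j = t differ, so that
       (c_s - c_t) (alpha_t - alpha_s) = 0.
   Since alpha is strictly decreasing its entries are pairwise distinct,
   whence c_s = c_t. *)

Lemma majorized_sum (R : realFieldType) (n : nat) (x y : 'cV[R]_n) :
  majorized x y -> \sum_i x i 0 = \sum_i y i 0.
Proof.
move=> [D [[_ [_ colD]] ->]].
under eq_bigr do rewrite mxE.
rewrite exchange_big /=; apply: eq_bigr => j _.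
by rewrite -mulr_suml colD mul1r.
Qed.

Lemma sum_mulmx_col (R : comPzRingType) (n : nat) (A : 'M[R]_n) (v : 'cV[R]_n) :
  \sum_i (A *m v) i 0 = \sum_j (\sum_l A l j) * v j 0.
Proof.
under eq_bigr do rewrite mxE.
by rewrite exchange_big /=; apply: eq_bigr => j _; rewrite mulr_suml.
Qed.

Lemma weighted_sum_tperm (R : comPzRingType) (n : nat) (s t : 'I_n)
    (c v : 'I_n -> R) : s != t ->
  \sum_j c j * v (tperm s t j) - \sum_j c j * v j = (c s - c t) * (v t - v s).
Proof.
move=> neq_st; rewrite -sumrB (bigD1 s) // (bigD1 t (P := fun j => j != s)) 1?eq_sym //=.
rewrite big1 => [|j /andP [js jt]]; last by rewrite tpermD 1?eq_sym // subrr.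
by rewrite tpermL tpermR addr0; ring.
Qed.

Lemma strictly_decreasing_inj (R : realFieldType) (n : nat) (alpha : 'cV[R]_n) :
  (forall i j : 'I_n, (i < j)%N -> alpha j 0 < alpha i 0) ->
  forall i j : 'I_n, i != j -> alpha i 0 != alpha j 0.
Proof.
move=> dec i j neq_ij; have [lt_ij|gt_ij|eq_ij] := ltngtP i j.
- by rewrite gt_eqF // dec.
- by rewrite lt_eqF // dec.
- by rewrite (val_inj eq_ij) eqxx in neq_ij.
Qed.

Theorem mainTheorem4 (R : realFieldType) (n : nat) (Hn : (2 <= n)%N)
  (alpha : 'cV[R]_n)
  (Hdec : forall i j : 'I_n, (i < j)%N -> alpha j 0 < alpha i 0)
  (A : 'M[R]_n)
  (HA : forall s : 'S_n, maj_equiv (A *m (perm_mx s *m alpha)) (A *m alpha)) :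
  forall s t : 'I_n, \sum_(l < n) A l s = \sum_(l < n) A l t.
Proof.
move=> s t; have [-> // | neq_st] := eqVneq s t.
pose c j := \sum_(l < n) A l j.
have equal_sums : \sum_j c j * alpha (tperm s t j) 0 = \sum_j c j * alpha j 0.
  rewrite -(sum_mulmx_col A alpha) -(majorized_sum (proj1 (HA (tperm s t)))).
  by rewrite sum_mulmx_col; apply: eq_bigr => j _; rewrite -row_permE mxE.
have := weighted_sum_tperm c (fun j => alpha j 0) neq_st.
rewrite /= equal_sums subrr => /esym/eqP.
rewrite mulf_eq0 !subr_eq0 => /orP [/eqP // | eq_alpha].
by have := strictly_decreasing_inj Hdec neq_st; rewrite eq_sym eq_alpha.
Qed.
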